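(* Let $q$ be a real number with $q\notin\{0,1,-1\}$ and let $a,b\in\mathbb{C}$. Then, as identities of formal power series in $z$ (hence for $z$ in a neighborhood of $0$): (1) $\mathrm{E}_q(a,b;z)\,\mathrm{E}_q(b,a;-z)=1$; (2) $\mathrm{E}_{q^{-1}}(a,b;z)=\mathrm{E}_q(b,a;z)$; (3) $\mathrm{E}_q(1,-q;z)=\frac{1}{1-(1-q)z}$; (4) $\mathrm{E}_q(-q,1;z)=1+(1-q)z$.
   Context: $[n]_q=\frac{1-q^n}{1-q}$, $[0]_q!=1$, $[n]_q!=\prod_{k=1}^n[k]_q$. $(a\oplus b)^0_{1,q}=1$, $(a\oplus b)^n_{1,q}=\prod_{i=0}^{n-1}(a+bq^i)$. $\mathrm{E}_q(a,b;z)=\sum_{n=0}^\infty(a\oplus b)^n_{1,q}\frac{z^n}{[n]_q!}$. *)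

From HB Require Import structures.
From mathcomp Require Import all_boot all_order all_algebra.
From mathcomp Require Import reals.
From mathcomp.real_closed Require Import complex.
Set Implicit Arguments. Unset Strict Implicit. Unset Printing Implicit Defensive.
Import Order.TTheory GRing.Theory Num.Theory.
Local Open Scope ring_scope.

(* Formal power series in z over a ring K are represented by their
   coefficient sequences  nat -> K. *)
Definition fps (K : Type) := nat -> K.

Definition fps_mul (K : pzRingType) (f g : fps K) : fps K :=
  fun n => \sum_(i < n.+1) f i * g (n - i)%N.

Definition fps_one (K : pzRingType) : fps K := fun n => (n == 0%N)%:R.

Definition fps_negz (K : pzRingType) (f : fps K) : fps K :=
  fun n => (-1) ^+ n * f n.

Definition fps_lin (K : pzRingType) (c : K) : fps K :=
  fun n => if n == 0%N then 1 else if n == 1%N then c else 0.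

Definition qint (K : fieldType) (q : K) (n : nat) : K := (1 - q ^+ n) / (1 - q).

Definition qfact (K : fieldType) (q : K) (n : nat) : K :=
  \prod_(1 <= k < n.+1) qint q k.

Definition qpow (K : fieldType) (a b q : K) (n : nat) : K :=
  \prod_(i < n) (a + b * q ^+ i).

Definition Eq (K : fieldType) (q a b : K) : fps K :=
  fun n => qpow a b q n / qfact q n.

From mathcomp Require Import all_boot all_algebra.
From mathcomp Require Import reals.
From mathcomp.real_closed Require Import complex.
From mathcomp Require Import boolp ring.
Set Implicit Arguments. Unset Strict Implicit. Unset Printing Implicit Defensive.
Import GRing.Theory Num.Theory.
Local Open Scope ring_scope.
Local Open Scope complex_scope.

(* With D_q the Jackson derivative (f(z) - f(qz))/((1 - q)z), coefficientwise
   [fps_qderiv], and [fps_qdilate] the substitution z |-> qz, the series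
   E = E_q(a,b;z) solves D_q E = a E + b E(qz), while G = E_q(b,a;-z) solves
   D_q G = -(b G + a G(qz)).  The q-Leibniz rule D_q(FG) = D_q F G + F(qz) D_q G
   then gives D_q h = a (h - h(qz)) for h = E G, i.e.
   [n+1]_q h_(n+1) = a (1 - q^n) h_n; as h_0 = 1 and the factor vanishes at
   n = 0, h = 1 as soon as no [n+1]_q vanishes.  Under q |-> 1/q the factor
   a + b q^n becomes q^(-n) (b + a q^n) and [n+1]_q becomes q^(-n) [n+1]_q,
   whence (2).  E_q(1,-q;z) is the geometric series of (1 - q)z, and every
   coefficient of E_q(-q,1;z) past the first contains the factor -q + q = 0. *)

Definition fps_qderiv (K : fieldType) (q : K) (f : fps K) : fps K :=
  fun n => qint q n.+1 * f n.+1.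

Definition fps_qdilate (K : pzRingType) (q : K) (f : fps K) : fps K :=
  fun n => q ^+ n * f n.

Lemma fps_mul_geom_lin (K : pzRingType) (c : K) :
  fps_mul (fun n => c ^+ n) (fps_lin (- c)) = fps_one K.
Proof.
apply: funext => -[|n]; rewrite /fps_mul /fps_one /fps_lin.
  by rewrite big_ord_recr big_ord0 /= add0r mulr1.
rewrite !big_ord_recr big1 /= => [|i _].
  by rewrite subSn // !subnn /= add0r mulr1 mulrN -exprSr addNr.
by rewrite subSn ?(ltnW (ltn_ord i)) //= eqSS subn_eq0 leqNgt ltn_ord mulr0.
Qed.

Section QCalculus.
Variables (K : fieldType) (q : K).

Lemma qint0 : qint q 0 = 0.
Proof. by rewrite /qint expr0 subrr mul0r. Qed.

Lemma qintD m n : qint q (m + n) = qint q m + q ^+ m * qint q n.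
Proof. by rewrite /qint exprD; ring. Qed.

Lemma Eq0 a b : Eq q a b 0 = 1.
Proof. by rewrite /Eq /qpow /qfact big_ord0 big_geq // divr1. Qed.

Lemma EqS a b n : Eq q a b n.+1 = Eq q a b n * (a + b * q ^+ n) / qint q n.+1.
Proof. by rewrite /Eq /qpow /qfact big_ord_recr big_nat_recr //= invfM; ring. Qed.

Lemma fps_qderivM f g n :
  fps_qderiv q (fps_mul f g) n =
  fps_mul (fps_qderiv q f) g n + fps_mul (fps_qdilate q f) (fps_qderiv q g) n.
Proof.
rewrite /fps_qderiv /fps_mul /fps_qdilate mulr_sumr.
transitivity (\sum_(i < n.+2) qint q i * f i * g (n.+1 - i)%N
  + \sum_(i < n.+2) q ^+ i * f i * (qint q (n.+1 - i) * g (n.+1 - i)%N)).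
  rewrite -big_split; apply: eq_bigr => i _ /=.
  by rewrite -{1}(subnKC (ltn_ord i : i <= n.+1)%N) qintD; ring.
congr (_ + _).
  rewrite big_ord_recl qint0 !mul0r add0r.
  by apply: eq_bigr => i _; rewrite lift0 subSS.
rewrite big_ord_recr /= subnn qint0 mul0r mulr0 addr0.
by apply: eq_bigr => i _; rewrite subSn // -ltnS.
Qed.

Lemma fps_qderiv_negz f n :
  fps_qderiv q (fps_negz f) n = - fps_negz (fps_qderiv q f) n.
Proof. by rewrite /fps_qderiv /fps_negz exprS; ring. Qed.

Lemma qint_inv n : q != 0 -> qint q^-1 n.+1 = q ^- n * qint q n.+1.
Proof.
move=> q_neq0; have [->|q_neq1] := eqVneq q 1.
  by rewrite invr1 expr1n invr1 mul1r.
have qn_neq0 : q ^+ n != 0 by rewrite expf_neq0.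
by rewrite /qint !exprVn exprS; field; rewrite !subr_eq0 eq_sym q_neq1 qn_neq0 q_neq0.
Qed.

Lemma Eq_Nq_1 : q != 1 -> Eq q (- q) 1 = fps_lin (1 - q).
Proof.
move=> q_neq1; have q1_neq0 : 1 - q != 0 by rewrite subr_eq0 eq_sym.
apply: funext => -[|[|n]]; rewrite /fps_lin /=; first exact: Eq0.
  by rewrite EqS Eq0 /qint expr0 expr1 mulr1 mul1r addrC divff // divr1.
by rewrite /Eq /qpow !big_ord_recl lift0 /= expr1 !mul1r addNr mul0r mulr0 mul0r.
Qed.

Hypothesis qint_neq0 : forall n, qint q n.+1 != 0.

Lemma qint_neq0_neq1 : q != 1.
Proof.
by apply: contraNneq (qint_neq0 0) => ->; rewrite /qint subrr mul0r.
Qed.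

Lemma Eq_qderiv a b n :
  fps_qderiv q (Eq q a b) n = a * Eq q a b n + b * fps_qdilate q (Eq q a b) n.
Proof.
by rewrite /fps_qderiv /fps_qdilate EqS mulrC mulfVK ?qint_neq0 //; ring.
Qed.

Lemma Eq_mul_negz_qderiv a b n :
  fps_qderiv q (fps_mul (Eq q a b) (fps_negz (Eq q b a))) n =
  a * (1 - q ^+ n) * fps_mul (Eq q a b) (fps_negz (Eq q b a)) n.
Proof.
rewrite fps_qderivM /fps_mul mulr_sumr -big_split; apply: eq_bigr => i _ /=.
rewrite !fps_qderiv_negz /fps_negz /fps_qdilate !Eq_qderiv /fps_qdilate.
have -> : q ^+ n = q ^+ i * q ^+ (n - i) by rewrite -exprD subnKC // -ltnS.
ring.
Qed.

Lemma Eq_mul_negz a b : fps_mul (Eq q a b) (fps_negz (Eq q b a)) = fps_one K.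
Proof.
set h := fps_mul _ _.
have rec n : h n.+1 = a * (1 - q ^+ n) / qint q n.+1 * h n.
  by rewrite mulrAC -(Eq_mul_negz_qderiv a b n) /fps_qderiv -/h mulrC mulKf.
have h0 : h 0 = 1.
  by rewrite /h /fps_mul big_ord_recr big_ord0 /= /fps_negz !Eq0 add0r !mulr1.
have hS n : h n.+1 = 0.
  by elim: n => [|n IHn]; rewrite rec ?IHn ?mulr0 // expr0 subrr mulr0 !mul0r.
by apply: funext => -[|n]; rewrite /fps_one /= ?h0 ?hS.
Qed.

Lemma Eq_1_Nq n : Eq q 1 (- q) n = (1 - q) ^+ n.
Proof.
have q1_neq0 : 1 - q != 0 by rewrite subr_eq0 eq_sym qint_neq0_neq1.
elim: n => [|n IHn]; first by rewrite Eq0.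
rewrite EqS IHn mulNr -exprS -(divfK q1_neq0 (1 - q ^+ n.+1)) -/(qint q n.+1).
by rewrite mulrCA mulrAC mulfV // mul1r exprSr.
Qed.

End QCalculus.

Lemma Eq_inv (K : fieldType) (q a b : K) : q != 0 -> Eq q^-1 a b = Eq q b a.
Proof.
move=> q_neq0; apply: funext => n; elim: n => [|n IHn]; first by rewrite !Eq0.
have qn_neq0 : q ^- n != 0 by rewrite invr_eq0 expf_neq0.
rewrite !EqS IHn qint_inv //.
have -> : a + b * q^-1 ^+ n = (b + a * q ^+ n) * q ^- n.
  by rewrite exprVn mulrDl -mulrA divff ?expf_neq0 // mulr1 addrC.
by rewrite mulrA [q ^- n * _]mulrC -mulf_div divff // mulr1.
Qed.

Lemma fmorph_qint (K L : fieldType) (f : {rmorphism K -> L}) (q : K) n :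
  f (qint q n) = qint (f q) n.
Proof. by rewrite /qint fmorph_div !rmorphB rmorph1 rmorphXn. Qed.

Lemma real_qint_neq0 (R : realFieldType) (q : R) n :
  q != 1 -> q != -1 -> qint q n.+1 != 0.
Proof.
move=> q_neq1 q_neqN1; rewrite /qint mulf_neq0 ?invr_eq0 ?subr_eq0 1?eq_sym //.
apply: contra_neq q_neq1 => qn1.
have /eqP : `|q| ^+ n.+1 = 1 by rewrite -normrX qn1 normr1.
rewrite pexpr_eq1 // eqr_norml ler01 andbT => /orP[/eqP //|/eqP qN1].
by rewrite qN1 eqxx in q_neqN1.
Qed.

Theorem mainTheorem15 (R : realType) (q : R) (a b : R[i])
  (hq0 : q != 0) (hq1 : q != 1) (hqm1 : q != -1) :
  [/\ fps_mul (Eq q%:C a b) (fps_negz (Eq q%:C b a)) = fps_one R[i],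
      Eq (q^-1)%:C a b = Eq q%:C b a,
      fps_mul (Eq q%:C 1 (- q%:C)) (fps_lin (- (1 - q%:C))) = fps_one R[i]
    & Eq q%:C (- q%:C) 1 = fps_lin (1 - q%:C)].
Proof.
have qC_qint_neq0 n : qint q%:C n.+1 != 0.
  by rewrite -(fmorph_qint (real_complex R)) fmorph_eq0 real_qint_neq0.
have qC_neq1 := qint_neq0_neq1 qC_qint_neq0.
split.
- exact: Eq_mul_negz.
- by rewrite (fmorphV (real_complex R)) Eq_inv // fmorph_eq0.
- by rewrite (funext (Eq_1_Nq qC_qint_neq0)) fps_mul_geom_lin.
- exact: Eq_Nq_1.
Qed.
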